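(* Let $N\ge2$, let $W_1,\dots,W_N\in\mathbb{R}^{p\times q}$, $X_1,\dots,X_N\in\mathbb{R}^{q\times r}$, $\widetilde X_1,\dots,\widetilde X_N\in\mathbb{R}^{p\times\widetilde q}$ and $V_1,\dots,V_N\in\mathbb{R}^{\widetilde q\times r}$ be matrices, $\bar X=\frac1N\sum_kX_k$, $\bar{\widetilde X}=\frac1N\sum_k\widetilde X_k$. For a permutation $\pi$ of $[N]$ and $k\in[N]$ define \[\Sigma^\pi_{\ge k}=\frac1{N+1-k}\sum_{i=k}^N(X_{\pi(i)}-\bar X)(X_{\pi(i)}-\bar X)^\top,\qquad\widetilde\Sigma^\pi_{\ge k}=\frac1{N+1-k}\sum_{i=k}^N(\widetilde X_{\pi(i)}-\bar{\widetilde X})^\top(\widetilde X_{\pi(i)}-\bar{\widetilde X}).\] Then, with $\mathscr{S}_N$ the set of permutations of $[N]$, in the positive semidefinite order, \[ \frac1{N!}\sum_{\pi\in\mathscr{S}_N}\sum_{k=1}^NW_{\pi(k)}\Sigma^\pi_{\ge k}W_{\pi(k)}^\top\preceq\frac{\widetilde\sigma^2_X}{1+\epsilon_N}\sum_{k=1}^NW_kW_k^\top,\qquad\frac1{N!}\sum_{\pi\in\mathscr{S}_N}\sum_{k=1}^NV_{\pi(k)}^\top\widetilde\Sigma^\pi_{\ge k}V_{\pi(k)}\preceq\frac{\widetilde\sigma^2_{\widetilde X}}{1+\epsilon_N}\sum_{k=1}^NV_k^\top V_k. \]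
   Context: $\|\cdot\|$ is the operator norm. $\Sigma=\frac1N\sum_k(X_k-\bar X)(X_k-\bar X)^\top$, $\widetilde\Sigma=\frac1N\sum_k(\widetilde X_k-\bar{\widetilde X})^\top(\widetilde X_k-\bar{\widetilde X})$, $\widetilde\sigma^2_X=\|\Sigma\|+\epsilon_N\max_k\|X_k-\bar X\|^2$, $\widetilde\sigma^2_{\widetilde X}=\|\widetilde\Sigma\|+\epsilon_N\max_k\|\widetilde X_k-\bar{\widetilde X}\|^2$. $H_n=\sum_{j\le n}\frac1j$, $\epsilon_n=\frac{H_n-1}{n-H_n}$ for $n\ge2$. *)

From HB Require Import structures.
From mathcomp Require Import all_boot all_order all_algebra perm.
From mathcomp Require Import classical_sets.
From mathcomp Require Import reals.
Set Implicit Arguments. Unset Strict Implicit. Unset Printing Implicit Defensive.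
Import Order.TTheory GRing.Theory Num.Theory.
Local Open Scope ring_scope.

Definition vnorm2 (R : realType) (n : nat) (x : 'cV[R]_n) : R :=
  \sum_(i < n) (x i 0) ^+ 2.

Definition opnorm (R : realType) (m n : nat) (A : 'M[R]_(m, n)) : R :=
  reals.sup [set Num.sqrt (vnorm2 (A *m x)) | x in [set x : 'cV[R]_n | vnorm2 x <= 1]]%classic.

Definition psd_le (R : realType) (n : nat) (A B : 'M[R]_n) : Prop :=
  forall x : 'cV[R]_n, 0 <= (x^T *m (B - A) *m x) 0 0.

Definition harm (R : realType) (n : nat) : R := \sum_(j < n) ((j.+1)%:R)^-1.

Definition epsN (R : realType) (n : nat) : R := (harm R n - 1) / (n%:R - harm R n).

Definition mean (R : realType) (N m n : nat) (X : 'I_N -> 'M[R]_(m, n)) : 'M[R]_(m, n) :=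
  (N%:R)^-1 *: \sum_(k < N) X k.

(* Fix x and put u_j = L_j x, where L_j is W_j^T (resp. V_j), and
   f(j, l) = u_j^T D_l u_j with D_l the l-th centred outer product. Averaged
   over all permutations, the pair (pi(k), pi(i)) is uniform on the diagonal
   when i = k and uniform on the off-diagonal pairs when i > k; as
   sum_k 1/(N-k) = H_N and sum_k (N-k-1)/(N-k) = N - H_N, the left-hand
   quadratic form equals
     (H_N - 1)/(N - 1) sum_j f(j, j) + (N - H_N)/(N (N - 1)) sum_(j,l) f(j, l).
   Now f(j, j) <= max_k |X_k - Xbar|^2 |u_j|^2 and sum_l f(j, l) =
   N u_j^T Sigma u_j <= N |Sigma| |u_j|^2, while (H_N - 1)/(N - 1) =
   eps_N/(1 + eps_N) and (N - H_N)/(N - 1) = 1/(1 + eps_N). *)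

From HB Require Import structures.
From mathcomp Require Import all_boot all_order all_algebra perm.
From mathcomp Require Import classical_sets.
From mathcomp Require Import reals.
From mathcomp Require Import ring zify.
Import Order.TTheory GRing.Theory Num.Theory.
Set Implicit Arguments. Unset Strict Implicit. Unset Printing Implicit Defensive.
Local Open Scope ring_scope.

Lemma sqr_sum_mul_le (R : realDomainType) (I : finType) (a b : I -> R) :
  (\sum_i a i * b i) ^+ 2 <= (\sum_i a i ^+ 2) * (\sum_i b i ^+ 2).
Proof.
have gap_ge0 : 0 <= \sum_i \sum_j (a i * b j - a j * b i) ^+ 2.
  by apply: sumr_ge0 => i _; apply: sumr_ge0 => j _; apply: sqr_ge0.
have lagrange : \sum_i \sum_j (a i * b j - a j * b i) ^+ 2 =
    \sum_i \sum_j a i ^+ 2 * b j ^+ 2 + \sum_i \sum_j a j ^+ 2 * b i ^+ 2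
    - (\sum_i \sum_j (a i * b i) * (a j * b j)) *+ 2.
  rewrite -big_split -sumrMnl -sumrB; apply: eq_bigr => i _.
  by rewrite -big_split -sumrMnl -sumrB; apply: eq_bigr => j _ /=; ring.
move: gap_ge0; rewrite lagrange [X in _ + X - _]exchange_big /= -mulr2n.
rewrite subr_ge0 lerMn2r /=.
by rewrite expr2 !mulr_suml !(eq_bigr _ (fun i _ => mulr_sumr _ _ _ _)).
Qed.

Section EuclideanNorm.
Variable R : realType.

Lemma vnorm2_ge0 n (x : 'cV[R]_n) : 0 <= vnorm2 x.
Proof. by apply: sumr_ge0 => i _; apply: sqr_ge0. Qed.

Lemma vnorm2Z n c (x : 'cV[R]_n) : vnorm2 (c *: x) = c ^+ 2 * vnorm2 x.
Proof. by rewrite /vnorm2 mulr_sumr; apply: eq_bigr => i _; rewrite mxE exprMn. Qed.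

Lemma vnorm2_trmx_mulmx n (x : 'cV[R]_n) : vnorm2 x = (x^T *m x) 0 0.
Proof. by rewrite mxE; apply: eq_bigr => i _; rewrite mxE expr2. Qed.

Definition vnorm n (x : 'cV[R]_n) := Num.sqrt (vnorm2 x).

Lemma vnorm_ge0 n (x : 'cV[R]_n) : 0 <= vnorm x.
Proof. exact: sqrtr_ge0. Qed.

Lemma sqr_vnorm n (x : 'cV[R]_n) : vnorm x ^+ 2 = vnorm2 x.
Proof. by rewrite sqr_sqrtr // vnorm2_ge0. Qed.

Lemma dot_le_vnorm n (x y : 'cV[R]_n) : (x^T *m y) 0 0 <= vnorm x * vnorm y.
Proof.
rewrite -sqrtrM ?vnorm2_ge0 // (le_trans (ler_norm _)) // -sqrtr_sqr.
rewrite ler_sqrt ?mulr_ge0 ?vnorm2_ge0 // mxE.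
under eq_bigr do rewrite mxE.
exact: sqr_sum_mul_le.
Qed.

Lemma vnorm2_mulmx_le m n (A : 'M[R]_(m, n)) x :
  vnorm2 (A *m x) <= (\sum_i \sum_j A i j ^+ 2) * vnorm2 x.
Proof.
rewrite /vnorm2 mulr_suml; apply: ler_sum => i _.
by rewrite mxE sqr_sum_mul_le.
Qed.

End EuclideanNorm.

Section OperatorNorm.
Variable R : realType.

Lemma vnorm_mulmx_le_opnorm_unit m n (A : 'M[R]_(m, n)) x :
  vnorm2 x <= 1 -> vnorm (A *m x) <= opnorm A.
Proof.
move=> x_le1; apply: ub_le_sup; last by exists x.
have frob_ge0 : 0 <= \sum_i \sum_j A i j ^+ 2.
  by apply: sumr_ge0 => i _; apply: sumr_ge0 => j _; apply: sqr_ge0.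
exists (Num.sqrt (\sum_i \sum_j A i j ^+ 2)) => _ [y /= y_le1 <-].
by rewrite ler_sqrt // (le_trans (vnorm2_mulmx_le A y)) // ler_piMr.
Qed.

Lemma opnorm_ge0 m n (A : 'M[R]_(m, n)) : 0 <= opnorm A.
Proof.
have vnorm2_0 k : vnorm2 (0 : 'cV[R]_k) = 0.
  by rewrite /vnorm2 big1 // => i _; rewrite mxE expr0n.
have := @vnorm_mulmx_le_opnorm_unit m n A 0.
by rewrite mulmx0 /vnorm !vnorm2_0 sqrtr0 ler01 => /(_ isT).
Qed.

Lemma vnorm_mulmx_le m n (A : 'M[R]_(m, n)) x :
  vnorm (A *m x) <= opnorm A * vnorm x.
Proof.
have [x0 | x_neq0] := eqVneq (vnorm x) 0.
  have Ax_le0 : vnorm2 (A *m x) <= 0.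
    by rewrite (le_trans (vnorm2_mulmx_le A x)) // -sqr_vnorm x0 expr0n mulr0.
  by rewrite x0 mulr0 /vnorm le_eqVlt sqrtr_eq0 Ax_le0.
have x_gt0 : 0 < vnorm x by rewrite lt_def x_neq0 vnorm_ge0.
have := @vnorm_mulmx_le_opnorm_unit m n A ((vnorm x)^-1 *: x).
rewrite vnorm2Z -sqr_vnorm -exprMn mulVf // expr1n lexx -scalemxAr => /(_ isT).
rewrite /vnorm vnorm2Z sqrtrM ?sqr_ge0 // sqrtr_sqr gtr0_norm ?invr_gt0 //.
by rewrite -ler_pdivlMl ?invr_gt0 // invrK mulrC.
Qed.

Lemma vnorm_trmx_mulmx_le m n (A : 'M[R]_(m, n)) x :
  vnorm (A^T *m x) <= opnorm A * vnorm x.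
Proof.
set z := A^T *m x.
have [z0 | z_neq0] := eqVneq (vnorm z) 0.
  by rewrite z0 mulr_ge0 ?opnorm_ge0 ?vnorm_ge0.
have z_gt0 : 0 < vnorm z by rewrite lt_def z_neq0 vnorm_ge0.
(* |z|^2 = x^T (A z) <= |x| |A z| <= |x| |A| |z| *)
rewrite -(ler_pM2r z_gt0) -expr2 sqr_vnorm vnorm2_trmx_mulmx.
rewrite {1}/z trmx_mul trmxK -mulmxA (le_trans (dot_le_vnorm _ _)) //.
by rewrite -mulrA mulrCA ler_wpM2l ?vnorm_ge0 // vnorm_mulmx_le.
Qed.

End OperatorNorm.

Section LoewnerOrder.
Variable R : realType.

Definition qform n (x : 'cV[R]_n) (M : 'M[R]_n) : R := (x^T *m M *m x) 0 0.

Lemma qform0 n (x : 'cV[R]_n) : qform x 0 = 0.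
Proof. by rewrite /qform mulmx0 mul0mx mxE. Qed.

Lemma qformD n (x : 'cV[R]_n) M1 M2 : qform x (M1 + M2) = qform x M1 + qform x M2.
Proof. by rewrite /qform mulmxDr mulmxDl mxE. Qed.

Lemma qformB n (x : 'cV[R]_n) M1 M2 : qform x (M1 - M2) = qform x M1 - qform x M2.
Proof. by rewrite /qform mulmxBr mulmxBl !mxE. Qed.

Lemma qformZ n (x : 'cV[R]_n) c M : qform x (c *: M) = c * qform x M.
Proof. by rewrite /qform -scalemxAr -scalemxAl mxE. Qed.

Lemma qform_sum n (x : 'cV[R]_n) (I : Type) (r : seq I) (P : pred I) F :
  qform x (\sum_(i <- r | P i) F i) = \sum_(i <- r | P i) qform x (F i).
Proof. exact: (big_morph _ (qformD x) (qform0 x)). Qed.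

Lemma qform_scalar_mx n (x : 'cV[R]_n) a : qform x a%:M = a * vnorm2 x.
Proof. by rewrite /qform mul_mx_scalar -scalemxAl mxE vnorm2_trmx_mulmx. Qed.

Lemma qform_congr m n (A : 'M[R]_(m, n)) M x :
  qform x (A^T *m M *m A) = qform (A *m x) M.
Proof. by rewrite /qform trmx_mul !mulmxA. Qed.

Lemma qform_gram m n (A : 'M[R]_(m, n)) x : qform x (A^T *m A) = vnorm2 (A *m x).
Proof. by rewrite vnorm2_trmx_mulmx /qform trmx_mul !mulmxA. Qed.

Lemma psd_leP n (A B : 'M[R]_n) :
  psd_le A B <-> forall x, qform x A <= qform x B.
Proof.
by split=> le_AB x; have := le_AB x; rewrite -/(qform x (B - A)) qformB subr_ge0.
Qed.

Lemma psd_le_trans n (A B C : 'M[R]_n) : psd_le A B -> psd_le B C -> psd_le A C.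
Proof.
move=> /psd_leP le_AB /psd_leP le_BC.
by apply/psd_leP=> x; apply: le_trans (le_BC x).
Qed.

Lemma psd_le_scalar_mx n (a b : R) : a <= b -> psd_le (a%:M : 'M_n) b%:M.
Proof.
by move=> le_ab; apply/psd_leP=> x; rewrite !qform_scalar_mx ler_wpM2r ?vnorm2_ge0.
Qed.

Lemma psd_le_opnorm n (S : 'M[R]_n) : psd_le S (opnorm S)%:M.
Proof.
apply/psd_leP=> x; rewrite qform_scalar_mx -sqr_vnorm /qform -mulmxA.
rewrite (le_trans (dot_le_vnorm _ _)) // expr2 mulrCA.
by rewrite ler_wpM2l ?vnorm_ge0 // vnorm_mulmx_le.
Qed.

Lemma psd_le_gram_opnorm m n (A : 'M[R]_(m, n)) :
  psd_le (A^T *m A) (opnorm A ^+ 2)%:M.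
Proof.
apply/psd_leP=> x; rewrite qform_gram qform_scalar_mx -!sqr_vnorm -exprMn.
by rewrite ler_sqr ?nnegrE ?mulr_ge0 ?opnorm_ge0 ?vnorm_ge0 // vnorm_mulmx_le.
Qed.

Lemma psd_le_gram_tr_opnorm m n (A : 'M[R]_(m, n)) :
  psd_le (A *m A^T) (opnorm A ^+ 2)%:M.
Proof.
apply/psd_leP=> x; rewrite -{1}(trmxK A) qform_gram qform_scalar_mx.
rewrite -!sqr_vnorm -exprMn.
by rewrite ler_sqr ?nnegrE ?mulr_ge0 ?opnorm_ge0 ?vnorm_ge0 // vnorm_trmx_mulmx_le.
Qed.

End LoewnerOrder.

Lemma fact_pred n : (0 < n)%N -> n`! = (n * n.-1`!)%N.
Proof. by case: n => // n _; rewrite factS. Qed.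

Section PermutationSums.
Variables (R : numDomainType) (N : nat).

Lemma perm_pair_transitive (k i k' i' : 'I_N) :
  k != i -> k' != i' -> exists t : 'S_N, t k = k' /\ t i = i'.
Proof.
move=> neq_ki neq_k'i'; pose m := tperm k k' i.
have neq_mk' : m != k' by rewrite -(tpermL k k') (inj_eq perm_inj) eq_sym.
exists (tperm k k' * tperm m i')%g.
by rewrite !permM -/m !tpermL tpermD // eq_sym.
Qed.

Lemma sum_perm_at (F : 'I_N -> R) (k : 'I_N) :
  \sum_(s : 'S_N) F (s k) = (\sum_j F j) *+ N.-1`!.
Proof.
have N_gt0 : (0 < N)%N by apply: leq_ltn_trans (ltn_ord k).
have sum_at_const k' : \sum_(s : 'S_N) F (s k') = \sum_(s : 'S_N) F (s k).
  rewrite (reindex_inj (mulgI (tperm k' k))).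
  by apply: eq_bigr => s _; rewrite permM tpermL.
apply: (pmulrnI N_gt0); rewrite /= -mulrnA mulnC -fact_pred //.
rewrite -[X in _ *+ X = _](card_ord N) -sumr_const.
rewrite -(eq_bigr _ (fun k' _ => sum_at_const k')).
rewrite exchange_big /= -card_Sn -sumr_const; apply: eq_bigr => s _.
by rewrite [RHS](reindex_inj (@perm_inj _ s)).
Qed.

Lemma sum_perm_pair (F : 'I_N -> 'I_N -> R) (k i : 'I_N) : k != i ->
  \sum_(s : 'S_N) F (s k) (s i) = (\sum_j \sum_(l | l != j) F j l) *+ N.-2`!.
Proof.
move=> neq_ki.
have N_gt1 : (1 < N)%N.
  by move: neq_ki (ltn_ord k) (ltn_ord i); rewrite -(inj_eq val_inj) /=; lia.
pose g k' i' := \sum_(s : 'S_N) F (s k') (s i').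
have g_const k' i' : k' != i' -> g k' i' = g k i.
  move=> neq_k'i'; have [t [tk ti]] := perm_pair_transitive neq_k'i' neq_ki.
  rewrite /g (reindex_inj (mulgI t)).
  by apply: eq_bigr => s _; rewrite !permM tk ti.
have sum_offdiag_g : \sum_k' \sum_(i' | i' != k') g k' i' = g k i *+ (N * N.-1).
  rewrite mulnC mulrnA -[X in _ = _ *+ X]card_ord -sumr_const.
  apply: eq_bigr => k' _; rewrite -[X in _ *+ X.-1](card_ord N) -(cardC1 k') -sumr_const.
  by apply: eq_big => [i' | i' neq_i'k']; rewrite ?inE // g_const // eq_sym.
have sum_offdiag_F : \sum_k' \sum_(i' | i' != k') g k' i' =
    (\sum_j \sum_(l | l != j) F j l) *+ N`!.
  rewrite -card_Sn -sumr_const; under eq_bigr do rewrite exchange_big.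
  rewrite exchange_big; apply: eq_bigr => s _ /=.
  rewrite [RHS](reindex_inj (@perm_inj _ s)); apply: eq_bigr => k' _.
  rewrite [RHS](reindex_inj (@perm_inj _ s)) /=.
  by apply: eq_bigl => i'; rewrite (inj_eq perm_inj).
have N1_gt0 : (0 < N.-1)%N by rewrite -subn1 subn_gt0.
apply: (@pmulrnI _ (N * N.-1)); first by rewrite muln_gt0 N1_gt0 ltnW.
rewrite /= -sum_offdiag_g sum_offdiag_F -mulrnA mulnC -mulnA -(fact_pred N1_gt0).
by rewrite -fact_pred // ltnW.
Qed.

End PermutationSums.

Section HarmonicNumbers.
Variable R : realType.

Lemma sum_inv_sub_harm N : \sum_(k < N) ((N - k)%:R)^-1 = harm R N.
Proof.
rewrite /harm [RHS](reindex_inj rev_ord_inj) /=.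
by apply: eq_bigr => k _; rewrite subnSK.
Qed.

Lemma sum_sub1_div_sub N :
  \sum_(k < N) (N - k.+1)%:R / (N - k)%:R = N%:R - harm R N.
Proof.
rewrite -sum_inv_sub_harm -[N in N%:R](card_ord N) -sumr_const -sumrB.
apply: eq_bigr => k _; rewrite -(subnSK (ltn_ord k)).
have m1_neq0 : ((N - k.+1).+1%:R : R) != 0 by rewrite pnatr_eq0.
by apply: (mulIf m1_neq0); rewrite mulrBl divfK // mul1r mulVf // -natr1 addrK.
Qed.

Lemma harm_ge1 N : (0 < N)%N -> 1 <= harm R N.
Proof.
case: N => // n _; rewrite /harm big_ord_recl /= invr1 lerDl.
by apply: sumr_ge0 => j _; rewrite invr_ge0.
Qed.

Lemma harm_lt N : (1 < N)%N -> harm R N < N%:R.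
Proof.
case: N => [|[|n]] // _; rewrite /harm big_ord_recl /= invr1.
rewrite -[X in _ < X]natr1 addrC ltrD2r.
have -> : n.+1%:R = \sum_(j < n.+1) (1 : R) by rewrite sumr_const card_ord.
apply: ltr_sum => [|j _].
  by apply/hasP; exists ord0; rewrite ?mem_index_enum.
by rewrite invf_lt1 ?ltr0n ?ltr1n.
Qed.

End HarmonicNumbers.

Section TailAverage.
Variables (R : realType) (N : nat).
Hypothesis N_gt1 : (1 < N)%N.

Lemma avg_perm_tail_sumE (F : 'I_N -> 'I_N -> R) :
  (N`!%:R)^-1 * \sum_(s : 'S_N) \sum_(k < N)
     (((N - k)%:R)^-1 * \sum_(i < N | (k <= i)%N) F (s k) (s i))
  = (harm R N - 1) / (N%:R - 1) * \sum_j F j j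
    + (N%:R - harm R N) / (N%:R * (N%:R - 1)) * \sum_j \sum_l F j l.
Proof.
set D := \sum_j F j j; set O := \sum_j \sum_(l | l != j) F j l.
have total : \sum_j \sum_l F j l = D + O.
  by rewrite -big_split; apply: eq_bigr => j _; rewrite (bigD1 j).
have tail (k : 'I_N) : \sum_(i < N | (k <= i)%N) \sum_(s : 'S_N) F (s k) (s i) =
    D * N.-1`!%:R + O * N.-2`!%:R * (N - k.+1)%:R.
  rewrite !mulr_natr (bigD1 k) //= (sum_perm_at (fun j => F j j)); congr (_ + _).
  rewrite (eq_bigr (fun=> O *+ N.-2`!)) => [|i /andP[_ neq_ik]]; last first.
    by rewrite sum_perm_pair // eq_sym.
  rewrite (eq_bigl (fun i : 'I_N => true && (k < i)%N)) => [|i]; last first.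
    by rewrite ltn_neqAle eq_sym andbC.
  by rewrite -(big_geq_mkord k.+1 N xpredT (fun=> O *+ N.-2`!)) sumr_const_nat.
clearbody D O; rewrite exchange_big /=.
under eq_bigr => k _ do rewrite -mulr_sumr exchange_big tail.
have N1_gt0 : (0 < N.-1)%N by rewrite -subn1 subn_gt0.
have N_neq0 : (N%:R : R) != 0 by rewrite pnatr_eq0 -lt0n ltnW.
have N1_neq0 : (N%:R - 1 : R) != 0 by rewrite subr_eq0 pnatr_eq1 gtn_eqF.
have fact_neq0 : (N.-2`!%:R : R) != 0 by rewrite pnatr_eq0 -lt0n fact_gt0.
have N1E : (N.-1%:R : R) = N%:R - 1 by rewrite -subn1 natrB // ltnW.
have -> : \sum_(k < N) (N - k)%:R^-1 * (D * N.-1`!%:R + O * N.-2`!%:R * (N - k.+1)%:R) =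
    harm R N * D * N.-1`!%:R + (N%:R - harm R N) * O * N.-2`!%:R.
  rewrite -sum_sub1_div_sub -sum_inv_sub_harm !mulr_suml -big_split.
  by apply: eq_bigr => k _ /=; ring.
rewrite total (fact_pred (ltnW N_gt1)) (fact_pred N1_gt0) !natrM N1E.
by field; rewrite N_neq0 N1_neq0 fact_neq0.
Qed.

Lemma avg_perm_tail_sum_le (F : 'I_N -> 'I_N -> R) (a b U : R) :
  \sum_j F j j <= a * U -> \sum_j \sum_l F j l <= N%:R * b * U ->
  (N`!%:R)^-1 * \sum_(s : 'S_N) \sum_(k < N)
     (((N - k)%:R)^-1 * \sum_(i < N | (k <= i)%N) F (s k) (s i))
  <= (b + epsN R N * a) / (1 + epsN R N) * U.
Proof.
move=> le_diag le_total; rewrite avg_perm_tail_sumE.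
have H_ge1 := harm_ge1 R (ltnW N_gt1); have H_ltN := harm_lt R N_gt1.
rewrite /epsN; set H := harm R N in H_ge1 H_ltN *.
have N_gt1R : 1 < (N%:R : R) by rewrite ltr1n.
have -> : (b + (H - 1) / (N%:R - H) * a) / (1 + (H - 1) / (N%:R - H)) * U =
    (H - 1) / (N%:R - 1) * (a * U) + (N%:R - H) / (N%:R * (N%:R - 1)) * (N%:R * b * U).
  by field; rewrite !subr_eq0 !gt_eqF // (lt_trans ltr01).
by rewrite lerD // ler_wpM2l // divr_ge0 ?mulr_ge0 ?subr_ge0 ?ler0n // ltW.
Qed.

End TailAverage.

(* [Lt] is [L^T] passed separately, so that both congruences [W S W^T] and
   [V^T S V] of the theorem are literal instances. *)
Lemma psd_le_avg_perm_tail (R : realType) (N n p : nat) (N_gt1 : (1 < N)%N)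
    (L : 'I_N -> 'M[R]_(n, p)) (Lt : 'I_N -> 'M[R]_(p, n))
    (D : 'I_N -> 'M[R]_n) (a b : R) :
  (forall j, Lt j = (L j)^T) ->
  (forall j, psd_le (D j) a%:M) -> psd_le (mean D) b%:M ->
  psd_le ((N`!%:R)^-1 *: \sum_(s : 'S_N) \sum_(k < N)
            (Lt (s k) *m (((N - k)%:R)^-1 *: \sum_(i < N | (k <= i)%N) D (s i))
               *m L (s k)))
         (((b + epsN R N * a) / (1 + epsN R N)) *: \sum_(k < N) (Lt k *m L k)).
Proof.
move=> LtE /(_ _)/psd_leP le_Da /psd_leP le_meanD; apply/psd_leP => x.
rewrite !qformZ !qform_sum.
under eq_bigr => s _ do rewrite qform_sum.
under eq_bigr => s _ do under eq_bigr => k _ do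
  rewrite LtE qform_congr qformZ qform_sum.
under [X in _ <= _ * X]eq_bigr => k _ do rewrite LtE qform_gram.
apply: (avg_perm_tail_sum_le N_gt1 (F := fun j l => qform (L j *m x) (D l)));
  rewrite mulr_sumr; apply: ler_sum => j _.
  by rewrite -qform_scalar_mx le_Da.
have sumD : \sum_l D l = N%:R *: mean D.
  by rewrite /mean scalerA mulfV ?scale1r // pnatr_eq0 -lt0n ltnW.
by rewrite -qform_sum sumD qformZ -mulrA ler_wpM2l // -qform_scalar_mx le_meanD.
Qed.

Theorem lemma11 (R : realType) (N p q r qt : nat) (hN : (2 <= N)%N)
  (W : 'I_N -> 'M[R]_(p, q)) (X : 'I_N -> 'M[R]_(q, r))
  (Xt : 'I_N -> 'M[R]_(p, qt)) (V : 'I_N -> 'M[R]_(qt, r)) :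
  let Xb := mean X in
  let Xtb := mean Xt in
  let Sigma := (N%:R)^-1 *: \sum_(k < N) ((X k - Xb) *m (X k - Xb)^T) in
  let Sigmat := (N%:R)^-1 *: \sum_(k < N) ((Xt k - Xtb)^T *m (Xt k - Xtb)) in
  let sig2X := opnorm Sigma
      + epsN R N * \big[Num.max/0]_(k < N) (opnorm (X k - Xb)) ^+ 2 in
  let sig2Xt := opnorm Sigmat
      + epsN R N * \big[Num.max/0]_(k < N) (opnorm (Xt k - Xtb)) ^+ 2 in
  (* k is 0-based here: the paper's k+1; N+1-(k+1) = N-k *)
  let Sge (s : 'S_N) (k : 'I_N) : 'M[R]_q :=
      ((N - k)%:R)^-1 *: \sum_(i < N | (k <= i)%N)
         ((X (s i) - Xb) *m (X (s i) - Xb)^T) in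
  let Stge (s : 'S_N) (k : 'I_N) : 'M[R]_qt :=
      ((N - k)%:R)^-1 *: \sum_(i < N | (k <= i)%N)
         ((Xt (s i) - Xtb)^T *m (Xt (s i) - Xtb)) in
  psd_le ((N`!%:R)^-1 *: \sum_(s : 'S_N) \sum_(k < N)
            (W (s k) *m Sge s k *m (W (s k))^T))
         ((sig2X / (1 + epsN R N)) *: \sum_(k < N) (W k *m (W k)^T))
  /\
  psd_le ((N`!%:R)^-1 *: \sum_(s : 'S_N) \sum_(k < N)
            ((V (s k))^T *m Stge s k *m V (s k)))
         ((sig2Xt / (1 + epsN R N)) *: \sum_(k < N) ((V k)^T *m V k)).
Proof.
move=> Xb Xtb Sigma Sigmat sig2X sig2Xt Sge Stge; split.
- apply: (psd_le_avg_perm_tail hN (L := fun j => (W j)^T)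
            (D := fun l => (X l - Xb) *m (X l - Xb)^T)) => [j | j |].
  + by rewrite trmxK.
  + apply: psd_le_trans (psd_le_gram_tr_opnorm _) _; apply: psd_le_scalar_mx.
    exact: (le_bigmax _ (fun k => opnorm (X k - Xb) ^+ 2)).
  + exact: psd_le_opnorm.
- apply: (psd_le_avg_perm_tail hN (L := V)
            (D := fun l => (Xt l - Xtb)^T *m (Xt l - Xtb))) => [// | j |].
  + apply: psd_le_trans (psd_le_gram_opnorm _) _; apply: psd_le_scalar_mx.
    exact: (le_bigmax _ (fun k => opnorm (Xt k - Xtb) ^+ 2)).
  + exact: psd_le_opnorm.
Qed.
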